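(* Let $h\colon R\to S$ be a flat morphism of commutative rings, $\mathfrak{a}\subseteq R$ an ideal, and $\kappa$ a cardinal such that infinitely many powers of $\mathfrak{a}$ have generating sets of cardinality at most $\kappa$. Let $M$ be an $R$-module such that the canonical morphism $\varepsilon_{S,M,\kappa}\colon S\otimes_R(M^\kappa)\to(S\otimes_RM)^\kappa$ is injective. Then the canonical monomorphism $\rho^h_\mathfrak{a}(M)\colon S\otimes_R\Gamma_\mathfrak{a}(M)\to\Gamma_{\mathfrak{a}S}(S\otimes_RM)$ is an isomorphism.
   Context: $\Gamma_\mathfrak{a}(M)=\{x\in M\mid \exists n\in\mathbb{N}:\mathfrak{a}^n\subseteq(0:_Rx)\}$; $\mathfrak{a}S$ denotes the ideal of $S$ generated by $h(\mathfrak{a})$. $\varepsilon_{S,M,\kappa}$ sends $s\otimes(m_i)_i$ to $(s\otimes m_i)_i$. Since $h$ is flat, the map $S\otimes_R\Gamma_\mathfrak{a}(M)\to S\otimes_RM$ is injective and its image lies in $\Gamma_{\mathfrak{a}S}(S\otimes_RM)$; $\rho^h_\mathfrak{a}(M)$ is the resulting injective $S$-linear map $s\otimes m\mapsto s\otimes m$. *)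

(* (algebra), with classical axioms to build the product
   module M^K over an arbitrary index type K. *)
From HB Require Import structures.
From mathcomp Require Import all_boot all_algebra.
From Stdlib Require Import ClassicalEpsilon FunctionalExtensionality.

Set Implicit Arguments.
Unset Strict Implicit.
Unset Printing Implicit Defensive.

Import GRing.Theory.
Local Open Scope ring_scope.

(* The product module  M^K = prod_{i in K} M  (K any type: a cardinal) *)

Definition cl_eq (T : Type) (x y : T) : bool :=
  if excluded_middle_informative (x = y) then true else false.

Lemma cl_eqP (T : Type) : Equality.axiom (@cl_eq T).
Proof.
move=> x y; rewrite /cl_eq; case: excluded_middle_informative => H.
  by constructor. by constructor.
Qed.

Definition cl_find (T : Type) (P : pred T) (n : nat) : option T :=
  match excluded_middle_informative (exists x, P x) with
  | left H => Some (proj1_sig (constructive_indefinite_description _ H))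
  | right _ => None
  end.

Lemma cl_find_correct (T : Type) (P : pred T) n x : cl_find P n = Some x -> P x.
Proof.
rewrite /cl_find; case: excluded_middle_informative => // H [<-].
exact: proj2_sig (constructive_indefinite_description _ H).
Qed.

Lemma cl_find_complete (T : Type) (P : pred T) :
  (exists x, P x) -> exists n, cl_find P n.
Proof.
move=> H; exists 0%N; rewrite /cl_find; case: excluded_middle_informative => //.
Qed.

Lemma cl_find_ext (T : Type) (P Q : pred T) : P =1 Q -> cl_find P =1 cl_find Q.
Proof.
move=> E; have -> : P = Q by apply: functional_extensionality.
by [].
Qed.

Section ProdMod.
Variables (R : pzRingType) (K : Type) (M : lmodType R).

Definition prodmod : Type := K -> M.

HB.instance Definition _ := hasDecEq.Build prodmod (@cl_eqP prodmod).
HB.instance Definition _ := hasChoice.Build prodmod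
  (@cl_find_correct prodmod) (@cl_find_complete prodmod) (@cl_find_ext prodmod).

Definition pm_zero : prodmod := fun _ => 0.
Definition pm_opp (f : prodmod) : prodmod := fun i => - f i.
Definition pm_add (f g : prodmod) : prodmod := fun i => f i + g i.
Definition pm_scale (a : R) (f : prodmod) : prodmod := fun i => a *: f i.

Lemma pm_addA : associative pm_add.
Proof. by move=> f g k; apply: functional_extensionality => i; rewrite /pm_add addrA. Qed.
Lemma pm_addC : commutative pm_add.
Proof. by move=> f g; apply: functional_extensionality => i; rewrite /pm_add addrC. Qed.
Lemma pm_add0 : left_id pm_zero pm_add.
Proof. by move=> f; apply: functional_extensionality => i; rewrite /pm_add /pm_zero add0r. Qed.
Lemma pm_addN : left_inverse pm_zero pm_opp pm_add.
Proof. by move=> f; apply: functional_extensionality => i; rewrite /pm_add /pm_opp addNr. Qed.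

HB.instance Definition _ :=
  GRing.isZmodule.Build prodmod pm_addA pm_addC pm_add0 pm_addN.

Lemma pm_scaleA a b (f : prodmod) : pm_scale a (pm_scale b f) = pm_scale (a * b) f.
Proof. by apply: functional_extensionality => i; rewrite /pm_scale scalerA. Qed.
Lemma pm_scale1 : left_id 1 pm_scale.
Proof. by move=> f; apply: functional_extensionality => i; rewrite /pm_scale scale1r. Qed.
Lemma pm_scaleDr : right_distributive pm_scale (@GRing.add prodmod).
Proof. by move=> a f g; apply: functional_extensionality => i; rewrite /pm_scale scalerDr. Qed.
Lemma pm_scaleDl (f : prodmod) : {morph pm_scale^~ f : a b / a + b}.
Proof. by move=> a b; apply: functional_extensionality => i; rewrite /pm_scale scalerDl. Qed.

HB.instance Definition _ :=
  GRing.Zmodule_isLmodule.Build R prodmod pm_scaleA pm_scale1 pm_scaleDr pm_scaleDl.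

Lemma prodmod_addE (f g : prodmod) i : (f + g) i = f i + g i. Proof. by []. Qed.
Lemma prodmod_scaleE a (f : prodmod) i : (a *: f) i = a *: f i. Proof. by []. Qed.

End ProdMod.

Definition is_ideal (R : comPzRingType) (I : R -> Prop) : Prop :=
  [/\ I 0, (forall x y, I x -> I y -> I (x + y)) & (forall r x, I x -> I (r * x))].

Definition ideal_span (R : comPzRingType) (X : R -> Prop) : R -> Prop :=
  fun r => forall I : R -> Prop, is_ideal I -> (forall x, X x -> I x) -> I r.

Fixpoint ideal_pow (R : comPzRingType) (a : R -> Prop) (n : nat) : R -> Prop :=
  match n with
  | 0%N => fun _ => True
  | n'.+1 => ideal_span (fun r => exists x y, ideal_pow a n' x /\ a y /\ r = x * y)
  end.

Definition ideal_ext (R S : comPzRingType) (h : {rmorphism R -> S}) (a : R -> Prop)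
  : S -> Prop := ideal_span (fun s => exists r, a r /\ s = h r).

Definition gen_card_le (R : comPzRingType) (I : R -> Prop) (K : Type) : Prop :=
  exists X : R -> Prop,
    (exists f : {x : R | X x} -> K, injective f) /\
    (forall r, I r <-> ideal_span X r).

Definition in_Gamma (R : comPzRingType) (a : R -> Prop) (M : lmodType R) (x : M)
  : Prop := exists n : nat, forall r, ideal_pow a n r -> r *: x = 0.

(* t : S -> M -> T is the map (s, m) |-> s (x) m.                        *)

Definition base_change_bilin (R S : comPzRingType) (h : {rmorphism R -> S})
  (M : lmodType R) (P : lmodType S) (f : S -> M -> P) : Prop :=
  [/\ (forall s s' m, f (s + s') m = f s m + f s' m),
      (forall s m m', f s (m + m') = f s m + f s m'),
      (forall r s m, f (h r * s) m = f s (r *: m)) &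
      (forall s s' m, f (s * s') m = s *: f s' m)].

Definition is_base_change (R S : comPzRingType) (h : {rmorphism R -> S})
  (M : lmodType R) (T : lmodType S) (t : S -> M -> T) : Prop :=
  base_change_bilin h t /\
  forall (P : lmodType S) (f : S -> M -> P), base_change_bilin h f ->
    exists g : {linear T -> P},
      (forall s m, g (t s m) = f s m) /\
      (forall g' : {linear T -> P}, (forall s m, g' (t s m) = f s m) ->
         forall x, g' x = g x).

Definition flat_morphism (R S : comPzRingType) (h : {rmorphism R -> S}) : Prop :=
  forall (N N' : lmodType R) (u : {linear N -> N'}), injective u ->
  forall (T : lmodType S) (t : S -> N -> T) (T' : lmodType S) (t' : S -> N' -> T'),
    is_base_change h t -> is_base_change h t' ->
    forall g : {linear T -> T'}, (forall s n, g (t s n) = t' s (u n)) -> injective g.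

From HB Require Import structures.
From mathcomp Require Import all_boot all_algebra.
From Stdlib Require Import ClassicalEpsilon FunctionalExtensionality.
From Stdlib Require Import PropExtensionality ProofIrrelevance.

Set Implicit Arguments.
Unset Strict Implicit.
Unset Printing Implicit Defensive.

Import GRing.Theory.
Local Open Scope ring_scope.

(* Injectivity of rho is flatness, and pure tensors s (x) y with a^n y = 0 are
   killed by (aS)^n, so the image of rho lies in Gamma_aS(S (x) M).
   Conversely, let z be killed by (aS)^n and pick n' >= n such that a^n' is
   generated by a family (c_k)_(k in kappa).  The map M -> M^kappa,
   m |-> (c_k m)_k, has kernel (0 :_M a^n') inside Gamma_a(M); factor it as
   M ->> W >-> M^kappa.  By flatness S (x) W -> S (x) M^kappa is injective, and
   followed by the injective eps it sends the image of z to (h(c_k) z)_k = 0.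
   So z dies in S (x) W, and right exactness of S (x) - applied to
   Gamma_a(M) -> M -> W -> 0 puts z in the image of rho. *)

Definition as_linear (R : pzRingType) (U V : lmodType R) (f : U -> V)
  (f_lin : linear f) : {linear U -> V} :=
  HB.pack f (GRing.isLinear.Build R U V *:%R f f_lin).

Definition is_submodule (R : pzRingType) (V : lmodType R) (P : V -> Prop) : Prop :=
  [/\ P 0, (forall x y, P x -> P y -> P (x + y)) & (forall a x, P x -> P (a *: x))].

Lemma is_submodule_preim (R : pzRingType) (U V : lmodType R) (f : {linear U -> V})
  (P : V -> Prop) : is_submodule P -> is_submodule (fun x => P (f x)).
Proof.
case=> P0 PD PZ; split; first by rewrite linear0.
- by move=> x y Px Py; rewrite linearD; apply: PD.
- by move=> a x Px; rewrite linearZ; apply: PZ.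
Qed.

Lemma is_submodule_image (R : pzRingType) (U V : lmodType R) (f : {linear U -> V}) :
  is_submodule (fun v => exists u, f u = v).
Proof.
split; first by exists 0; rewrite linear0.
- by move=> _ _ [x <-] [y <-]; exists (x + y); rewrite linearD.
- by move=> a _ [x <-]; exists (a *: x); rewrite linearZ.
Qed.

(* A module presented up to a Prop-valued congruence; its quotient by the
   congruence is built from equivalence classes, using proof irrelevance and
   extensionality to identify equal classes. *)
Record lmod_setoid (R : pzRingType) := LmodSetoid {
  ls_T : Type;
  ls_eq : ls_T -> ls_T -> Prop;
  ls_zero : ls_T;
  ls_add : ls_T -> ls_T -> ls_T;
  ls_opp : ls_T -> ls_T;
  ls_scale : R -> ls_T -> ls_T;
  ls_eq_refl : forall x, ls_eq x x;
  ls_eq_sym : forall x y, ls_eq x y -> ls_eq y x;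
  ls_eq_trans : forall x y z, ls_eq x y -> ls_eq y z -> ls_eq x z;
  ls_add_eq : forall x x' y y', ls_eq x x' -> ls_eq y y' ->
    ls_eq (ls_add x y) (ls_add x' y');
  ls_opp_eq : forall x x', ls_eq x x' -> ls_eq (ls_opp x) (ls_opp x');
  ls_scale_eq : forall a x x', ls_eq x x' -> ls_eq (ls_scale a x) (ls_scale a x');
  ls_addA : forall x y z, ls_eq (ls_add x (ls_add y z)) (ls_add (ls_add x y) z);
  ls_addC : forall x y, ls_eq (ls_add x y) (ls_add y x);
  ls_add0 : forall x, ls_eq (ls_add ls_zero x) x;
  ls_addN : forall x, ls_eq (ls_add (ls_opp x) x) ls_zero;
  ls_scaleA : forall a b x, ls_eq (ls_scale a (ls_scale b x)) (ls_scale (a * b) x);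
  ls_scale1 : forall x, ls_eq (ls_scale 1 x) x;
  ls_scaleDr : forall a x y,
    ls_eq (ls_scale a (ls_add x y)) (ls_add (ls_scale a x) (ls_scale a y));
  ls_scaleDl : forall a b x,
    ls_eq (ls_scale (a + b) x) (ls_add (ls_scale a x) (ls_scale b x))
}.

Section SetoidQuotient.
Variables (R : pzRingType) (p : lmod_setoid R).
Local Notation X := (ls_T p).
Local Notation E := (@ls_eq _ p).

Definition setoid_quot := {C : X -> Prop | exists x, C = E x}.
Definition qclass (x : X) : setoid_quot := exist _ (E x) (ex_intro _ x erefl).
Definition qrepr (c : setoid_quot) : X :=
  proj1_sig (constructive_indefinite_description _ (proj2_sig c)).

Lemma qreprK c : qclass (qrepr c) = c.
Proof.
rewrite /qrepr; case: c => C C_class /=.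
case: constructive_indefinite_description => x /= Cx; subst C.
by congr exist; apply: proof_irrelevance.
Qed.

Lemma qclass_eq x y : qclass x = qclass y <-> E x y.
Proof.
split=> [[->]|Exy]; first exact: ls_eq_refl.
have Ex_Ey : E x = E y.
  apply: functional_extensionality => w; apply: propositional_extensionality.
  by split; apply: ls_eq_trans; [apply: ls_eq_sym|].
rewrite /qclass; move: (ex_intro _ x erefl : exists w, E x = E w).
by rewrite Ex_Ey => pf; congr exist; apply: proof_irrelevance.
Qed.

Lemma qrepr_eq x : E (qrepr (qclass x)) x.
Proof. by apply/qclass_eq; rewrite qreprK. Qed.

Lemma qclass_surj (c : setoid_quot) : exists x, c = qclass x.
Proof. by exists (qrepr c); rewrite qreprK. Qed.

Definition qzero : setoid_quot := qclass (ls_zero p).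
Definition qadd c d : setoid_quot := qclass (ls_add (qrepr c) (qrepr d)).
Definition qopp c : setoid_quot := qclass (ls_opp (qrepr c)).
Definition qscale a c : setoid_quot := qclass (ls_scale a (qrepr c)).

Lemma qaddE x y : qadd (qclass x) (qclass y) = qclass (ls_add x y).
Proof. by apply/qclass_eq; apply: ls_add_eq; apply: qrepr_eq. Qed.
Lemma qoppE x : qopp (qclass x) = qclass (ls_opp x).
Proof. by apply/qclass_eq; apply: ls_opp_eq; apply: qrepr_eq. Qed.
Lemma qscaleE a x : qscale a (qclass x) = qclass (ls_scale a x).
Proof. by apply/qclass_eq; apply: ls_scale_eq; apply: qrepr_eq. Qed.

HB.instance Definition _ := hasDecEq.Build setoid_quot (@cl_eqP setoid_quot).
HB.instance Definition _ := hasChoice.Build setoid_quot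
  (@cl_find_correct setoid_quot) (@cl_find_complete setoid_quot)
  (@cl_find_ext setoid_quot).

Lemma qaddA : associative qadd.
Proof.
move=> c d e; case: (qclass_surj c) (qclass_surj d) (qclass_surj e) => x -> [y ->] [z ->].
by rewrite !qaddE; apply/qclass_eq; apply: ls_addA.
Qed.
Lemma qaddC : commutative qadd.
Proof.
move=> c d; case: (qclass_surj c) (qclass_surj d) => x -> [y ->].
by rewrite !qaddE; apply/qclass_eq; apply: ls_addC.
Qed.
Lemma qadd0 : left_id qzero qadd.
Proof. by move=> c; have [x ->] := qclass_surj c; rewrite qaddE; apply/qclass_eq/ls_add0. Qed.
Lemma qaddN : left_inverse qzero qopp qadd.
Proof.
by move=> c; have [x ->] := qclass_surj c; rewrite qoppE qaddE; apply/qclass_eq/ls_addN.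
Qed.

HB.instance Definition _ := GRing.isZmodule.Build setoid_quot qaddA qaddC qadd0 qaddN.

Lemma qscaleA a b c : qscale a (qscale b c) = qscale (a * b) c.
Proof. by have [x ->] := qclass_surj c; rewrite !qscaleE; apply/qclass_eq/ls_scaleA. Qed.
Lemma qscale1 : left_id 1 qscale.
Proof.
by move=> c; have [x ->] := qclass_surj c; rewrite qscaleE; apply/qclass_eq/ls_scale1.
Qed.
Lemma qscaleDr : right_distributive qscale (@GRing.add setoid_quot).
Proof.
move=> a c d; case: (qclass_surj c) (qclass_surj d) => x -> [y ->].
change (qscale a (qadd (qclass x) (qclass y)) =
        qadd (qscale a (qclass x)) (qscale a (qclass y))).
by rewrite qaddE !qscaleE qaddE; apply/qclass_eq/ls_scaleDr.
Qed.
Lemma qscaleDl c : {morph qscale^~ c : a b / a + b}.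
Proof.
move=> a b; have [x ->] := qclass_surj c.
change (qscale (a + b) (qclass x) = qadd (qscale a (qclass x)) (qscale b (qclass x))).
by rewrite !qscaleE qaddE; apply/qclass_eq/ls_scaleDl.
Qed.

HB.instance Definition _ :=
  GRing.Zmodule_isLmodule.Build R setoid_quot qscaleA qscale1 qscaleDr qscaleDl.

Lemma qclass0 : qclass (ls_zero p) = 0. Proof. by []. Qed.
Lemma qclassD x y : qclass x + qclass y = qclass (ls_add x y). Proof. exact: qaddE. Qed.
Lemma qclassZ a x : a *: qclass x = qclass (ls_scale a x). Proof. exact: qscaleE. Qed.

End SetoidQuotient.

Section QuotientModule.
Variables (R : pzRingType) (Q : lmodType R) (P : Q -> Prop) (P_sub : is_submodule P).

Let E (x y : Q) := P (x - y).

Let eq_E x y : x = y -> E x y.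
Proof. by case: P_sub => P0 _ _ ->; rewrite /E subrr. Qed.
Let E_sym x y : E x y -> E y x.
Proof. by case: P_sub => _ _ PZ Exy; rewrite /E -opprB -scaleN1r; apply: PZ. Qed.
Let E_trans x y z : E x y -> E y z -> E x z.
Proof. by case: P_sub => _ PD _ Exy Eyz; rewrite /E -[x](subrK y) -addrA; apply: PD. Qed.
Let add_E x x' y y' : E x x' -> E y y' -> E (x + y) (x' + y').
Proof. by case: P_sub => _ PD _ Ex Ey; rewrite /E opprD addrACA; apply: PD. Qed.
Let scale_E a x x' : E x x' -> E (a *: x) (a *: x').
Proof. by case: P_sub => _ _ PZ Ex; rewrite /E -scalerBr; apply: PZ. Qed.
Let opp_E x x' : E x x' -> E (- x) (- x').
Proof. by move=> Ex; rewrite -!scaleN1r; apply: scale_E. Qed.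

Definition quotmod_setoid : lmod_setoid R :=
  @LmodSetoid R Q E 0 +%R -%R *:%R (fun x => eq_E erefl) E_sym E_trans
   add_E opp_E scale_E
   (fun x y z => eq_E (addrA x y z)) (fun x y => eq_E (addrC x y))
   (fun x => eq_E (add0r x)) (fun x => eq_E (addNr x))
   (fun a b x => eq_E (scalerA a b x)) (fun x => eq_E (scale1r x))
   (fun a x y => eq_E (scalerDr a x y)) (fun a b x => eq_E (scalerDl x a b)).

Definition quotmod := setoid_quot quotmod_setoid.

Lemma quotmod_pi_is_linear : linear (qclass (p:=quotmod_setoid)).
Proof. by move=> a x y; rewrite qclassZ qclassD. Qed.

Definition quotmod_pi : {linear Q -> quotmod} := as_linear quotmod_pi_is_linear.

Lemma quotmod_pi_eq0 x : quotmod_pi x = 0 <-> P x.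
Proof. by rewrite -qclass0 qclass_eq /= /E subr0. Qed.

Lemma quotmod_pi_surj (c : quotmod) : exists x, quotmod_pi x = c.
Proof. by exists (qrepr c); rewrite /= qreprK. Qed.

End QuotientModule.

Lemma linear_epi_mono_factor (R : pzRingType) (M V : lmodType R) (f : {linear M -> V}) :
  exists (W : lmodType R) (p : {linear M -> W}) (i : {linear W -> V}),
    [/\ forall w, exists m, p m = w, injective i & forall m, i (p m) = f m].
Proof.
have ker_sub : is_submodule (fun m => f m = 0).
  apply: (is_submodule_preim f (P := eq^~ 0)).
  by split=> [|x y -> ->|a x ->]; rewrite ?addr0 ?scaler0.
pose p := quotmod_pi ker_sub.
have p_eq m m' : p m = p m' <-> f m = f m'.
  split=> [pmm'|fmm']; apply/subr0_eq; rewrite -linearB.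
    by apply/(quotmod_pi_eq0 ker_sub); rewrite linearB pmm' subrr.
  by apply/(quotmod_pi_eq0 ker_sub); rewrite /= linearB fmm' subrr.
pose sec (w : quotmod ker_sub) :=
  proj1_sig (constructive_indefinite_description _ (quotmod_pi_surj w)).
have secK w : p (sec w) = w.
  by rewrite /sec; case: constructive_indefinite_description.
have f_sec m : f (sec (p m)) = f m by apply/p_eq; rewrite secK.
have i_lin : linear (fun w => f (sec w)).
  move=> a w w'; case: (quotmod_pi_surj w) (quotmod_pi_surj w') => m <- [m' <-].
  by rewrite -linearP !f_sec linearP.
exists _, p, (as_linear i_lin); split=> //=; first exact: quotmod_pi_surj.
move=> w w'; case: (quotmod_pi_surj w) (quotmod_pi_surj w') => m <- [m' <-].
by rewrite !f_sec => /p_eq.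
Qed.

Section BaseChangeBilin.
Variables (R S : comPzRingType) (h : {rmorphism R -> S}).
Variables (N : lmodType R) (P : lmodType S) (f : S -> N -> P).
Hypothesis f_bilin : base_change_bilin h f.

Lemma bilin_subr s m m' : f s (m - m') = f s m - f s m'.
Proof. by case: f_bilin => _ fD _ _; rewrite -[in RHS](subrK m' m) (fD s (m - m')) addrK. Qed.

Lemma bilin_0r s : f s 0 = 0.
Proof. by rewrite -(subrr 0) bilin_subr subrr. Qed.

Lemma bilin_scaler s r m : f s (r *: m) = h r *: f s m.
Proof. by case: f_bilin => _ _ fZ fM; rewrite -fZ fM. Qed.

Lemma bilin_comp_linear (N' : lmodType R) (u : {linear N' -> N}) :
  base_change_bilin h (fun s n => f s (u n)).
Proof.
case: f_bilin => fDl fDr fZ fM; split=> //.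
- by move=> s n n'; rewrite linearD fDr.
- by move=> r s n; rewrite fZ linearZ.
Qed.

End BaseChangeBilin.

Section TensorProduct.
Variables (R S : comPzRingType) (h : {rmorphism R -> S}) (N : lmodType R).

(* Formal sums are lists of pairs, identified when every bilinear map agrees
   on them; this makes the universal property hold by construction. *)
Definition tensor_eval (P : lmodType S) (f : S -> N -> P) (l : seq (S * N)) : P :=
  \sum_(q <- l) f q.1 q.2.

Let X := seq (S * N).
Let E (l l' : X) := forall (P : lmodType S) (f : S -> N -> P),
  base_change_bilin h f -> tensor_eval f l = tensor_eval f l'.
Let tscale (a : S) (l : X) : X := map (fun q => (a * q.1, q.2)) l.

Lemma tensor_eval_cat (P : lmodType S) (f : S -> N -> P) l l' :
  tensor_eval f (l ++ l') = tensor_eval f l + tensor_eval f l'.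
Proof. exact: big_cat. Qed.

Lemma tensor_eval_scale (P : lmodType S) (f : S -> N -> P) a l :
  base_change_bilin h f -> tensor_eval f (tscale a l) = a *: tensor_eval f l.
Proof.
case=> _ _ _ fM; rewrite /tensor_eval big_map scaler_sumr.
by apply: eq_bigr => q _; rewrite fM.
Qed.

Let E_refl l : E l l. Proof. by []. Qed.
Let E_sym l l' : E l l' -> E l' l. Proof. by move=> El P f B; rewrite El. Qed.
Let E_trans l l' l'' : E l l' -> E l' l'' -> E l l''.
Proof. by move=> El El' P f B; rewrite El ?El'. Qed.
Let cat_E l1 l1' l2 l2' : E l1 l1' -> E l2 l2' -> E (l1 ++ l2) (l1' ++ l2').
Proof. by move=> E1 E2 P f B; rewrite !tensor_eval_cat E1 ?E2. Qed.
Let scale_E a l l' : E l l' -> E (tscale a l) (tscale a l').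
Proof. by move=> El P f B; rewrite !tensor_eval_scale // El. Qed.
Let opp_E l l' : E l l' -> E (tscale (-1) l) (tscale (-1) l').
Proof. exact: scale_E. Qed.
Let catA_E l1 l2 l3 : E (l1 ++ (l2 ++ l3)) ((l1 ++ l2) ++ l3).
Proof. by rewrite catA. Qed.
Let catC_E l l' : E (l ++ l') (l' ++ l).
Proof. by move=> P f B; rewrite !tensor_eval_cat addrC. Qed.
Let cat0_E l : E ([::] ++ l) l. Proof. by []. Qed.
Let catN_E l : E (tscale (-1) l ++ l) [::].
Proof.
move=> P f B; rewrite tensor_eval_cat tensor_eval_scale // scaleN1r addNr.
by rewrite /tensor_eval big_nil.
Qed.
Let scaleA_E a b l : E (tscale a (tscale b l)) (tscale (a * b) l).
Proof. by move=> P f B; rewrite !tensor_eval_scale // scalerA. Qed.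
Let scale1_E l : E (tscale 1 l) l.
Proof. by move=> P f B; rewrite tensor_eval_scale // scale1r. Qed.
Let scaleDr_E a l l' : E (tscale a (l ++ l')) (tscale a l ++ tscale a l').
Proof. by rewrite /tscale map_cat. Qed.
Let scaleDl_E a b l : E (tscale (a + b) l) (tscale a l ++ tscale b l).
Proof.
by move=> P f B; rewrite tensor_eval_cat !tensor_eval_scale // scalerDl.
Qed.

Definition tensor_setoid : lmod_setoid S :=
  @LmodSetoid S X E [::] cat (tscale (-1)) tscale E_refl E_sym E_trans
    cat_E opp_E scale_E catA_E catC_E cat0_E catN_E
    scaleA_E scale1_E scaleDr_E scaleDl_E.

Definition tensor := setoid_quot tensor_setoid.
Definition tens (s : S) (n : N) : tensor := qclass (p:=tensor_setoid) [:: (s, n)].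

Lemma tensor_evalE (P : lmodType S) (f : S -> N -> P) s n :
  tensor_eval f [:: (s, n)] = f s n.
Proof. by rewrite /tensor_eval big_seq1. Qed.

Lemma tens_base_change : is_base_change h tens.
Proof.
split.
  split=> [s s' n|s n n'|r s n|s s' n]; rewrite /tens ?qclassD ?qclassZ;
    apply/(qclass_eq (p:=tensor_setoid))=> P f B; rewrite /tensor_eval /=
    !big_cons !big_nil ?addr0 /=; case: B => fDl fDr fZ fM;
    first [by rewrite fDl | by rewrite fDr | by rewrite fZ | by rewrite fM].
move=> P f B.
pose g (c : tensor) := tensor_eval f (qrepr c).
have gE l : g (qclass l) = tensor_eval f l by apply: (qrepr_eq (p:=tensor_setoid)).
have g_lin : linear g.
  move=> a c d; case: (qclass_surj c) (qclass_surj d) => l -> [l' ->].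
  by rewrite qclassZ qclassD !gE tensor_eval_cat tensor_eval_scale.
exists (as_linear g_lin); split=> [s n|g' g'E c]; first by rewrite /= gE tensor_evalE.
have [l ->] := qclass_surj c; rewrite [RHS]/= gE.
have -> : qclass (p:=tensor_setoid) l = \sum_(q <- l) tens q.1 q.2.
  elim: l => [|[s n] l IHl]; first by rewrite big_nil.
  by rewrite big_cons -IHl /tens qclassD.
by rewrite linear_sum; apply: eq_bigr => q _; apply: g'E.
Qed.

End TensorProduct.

Lemma base_change_exists (R S : comPzRingType) (h : {rmorphism R -> S}) (N : lmodType R) :
  exists (T : lmodType S) (t : S -> N -> T), is_base_change h t.
Proof. by exists (tensor h N), (@tens _ _ h N); apply: tens_base_change. Qed.

Section Ideals.
Variable R : comPzRingType.
Implicit Types (X Y I : R -> Prop) (a : R -> Prop).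

Lemma ideal_span_ideal X : is_ideal (ideal_span X).
Proof.
split=> [I [] //|x y Sx Sy I I_ideal XI|r x Sx I I_ideal XI].
  by have [_ ID _] := I_ideal; apply: ID; [exact: Sx|exact: Sy].
by have [_ _ IM] := I_ideal; apply: IM; exact: Sx.
Qed.

Lemma ideal_span_sub X x : X x -> ideal_span X x.
Proof. by move=> Xx I _; apply. Qed.

Lemma ideal_span_min X I : is_ideal I -> (forall x, X x -> I x) ->
  forall r, ideal_span X r -> I r.
Proof. by move=> I_ideal XI r; apply. Qed.

Lemma ideal_span_le X Y : (forall x, X x -> ideal_span Y x) ->
  forall r, ideal_span X r -> ideal_span Y r.
Proof. exact: ideal_span_min (ideal_span_ideal Y). Qed.

Lemma ideal_span_mul X Y x y : ideal_span X x -> ideal_span Y y ->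
  ideal_span (fun z => exists u v, [/\ X u, Y v & z = u * v]) (x * y).
Proof.
set XY := fun z => _; have [XY0 XYD XYM] := ideal_span_ideal XY.
move=> Sx Sy; move: x Sx; apply: (ideal_span_min (I := fun x => ideal_span XY (x * y))).
  split=> [|x x' XYx XYx'|r x XYx]; first by rewrite mul0r.
    by rewrite mulrDl; apply: XYD.
  by rewrite -mulrA; apply: XYM.
move=> u Xu; move: y Sy; apply: (ideal_span_min (I := fun y => ideal_span XY (u * y))).
  split=> [|y y' XYy XYy'|r y XYy]; first by rewrite mulr0.
    by rewrite mulrDr; apply: XYD.
  by rewrite mulrCA; apply: XYM.
by move=> v Yv; apply: ideal_span_sub; exists u, v.
Qed.

Lemma ideal_pow_ideal a n : is_ideal (ideal_pow a n).
Proof. by case: n => [|n]; [split|apply: ideal_span_ideal]. Qed.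

Lemma ideal_pow_mono a m n : (m <= n)%N -> forall r, ideal_pow a n r -> ideal_pow a m r.
Proof.
move=> /subnK <-; elim: (n - m)%N => [|k IHk] //= r an_r; apply: IHk.
move: r an_r; apply: ideal_span_min; first exact: ideal_pow_ideal.
have [_ _ IM] := ideal_pow_ideal a (k + m); move=> _ [x [y [ax [_ ->]]]].
by rewrite mulrC; apply: IM.
Qed.

Lemma ann_ideal (V : lmodType R) (v : V) : is_ideal (fun r => r *: v = 0).
Proof.
split=> [|x y xv yv|r x xv]; first exact: scale0r.
  by rewrite scalerDl xv yv addr0.
by rewrite -scalerA xv scaler0.
Qed.

Lemma gen_card_le_family (K : Type) I : is_ideal I -> gen_card_le I K ->
  exists c : K -> R, (forall k, I (c k)) /\
    forall J, is_ideal J -> (forall k, J (c k)) -> forall r, I r -> J r.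
Proof.
move=> I_ideal [X [[f f_inj] I_span]].
(* An index outside the range of the injection f is sent to 0. *)
pose c k := match excluded_middle_informative (exists x, f x = k) with
  | left fx_k => proj1_sig (proj1_sig (constructive_indefinite_description _ fx_k))
  | right _ => 0 end.
have cf x : c (f x) = proj1_sig x.
  rewrite /c; case: excluded_middle_informative => [fx_k|[]]; last by exists x.
  by case: constructive_indefinite_description => x' /= /f_inj ->.
exists c; split=> [k|J J_ideal cJ r /I_span].
  rewrite /c; case: excluded_middle_informative => [fx_k|_]; last by case: I_ideal.
  case: constructive_indefinite_description => -[x Xx] /= _.
  by apply/I_span; apply: ideal_span_sub.
apply: ideal_span_min J_ideal _ r => x Xx.
by have := cJ (f (exist _ x Xx)); rewrite cf.
Qed.

End Ideals.

Section ExtendedIdeal.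
Variables (R S : comPzRingType) (h : {rmorphism R -> S}) (a : R -> Prop).

Lemma ideal_pow_ext n r : ideal_pow a n r -> ideal_pow (ideal_ext h a) n (h r).
Proof.
elim: n r => [|n IHn] //= r.
apply: (ideal_span_min (I := fun r => ideal_span _ (h r))) => [|_ [x [y [an_x [ay ->]]]]].
  have [I0 ID IM] := ideal_span_ideal (fun s => exists x y,
    ideal_pow (ideal_ext h a) n x /\ ideal_ext h a y /\ s = x * y).
  split=> [|x y|r' x]; rewrite ?rmorph0 ?rmorphD ?rmorphM //; [exact: ID|exact: IM].
rewrite rmorphM; apply: ideal_span_sub; exists (h x), (h y); split; first exact: IHn.
by split=> //; apply: ideal_span_sub; exists y.
Qed.

Lemma ideal_pow_ext_span n s : ideal_pow (ideal_ext h a) n s ->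
  ideal_span (fun t => exists r, ideal_pow a n r /\ t = h r) s.
Proof.
elim: n s => [|n IHn] s /=.
  move=> _; rewrite -[s]mulr1; have [_ _ IM] := ideal_span_ideal
    (fun t => exists r, ideal_pow a 0 r /\ t = h r).
  by apply: IM; apply: ideal_span_sub; exists 1; rewrite rmorph1.
apply: ideal_span_le => _ [x [y [an_x [aS_y ->]]]].
apply: ideal_span_le (ideal_span_mul (IHn x an_x) aS_y).
move=> _ [_ [_ [[u [an_u ->]] [v [av ->]] ->]]].
apply: ideal_span_sub; exists (u * v); rewrite rmorphM; split=> //.
by apply: ideal_span_sub; exists u, v.
Qed.

Lemma ideal_pow_ext_ann (T : lmodType S) (z : T) n :
  (forall r, ideal_pow a n r -> h r *: z = 0) ->
  forall s, ideal_pow (ideal_ext h a) n s -> s *: z = 0.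
Proof.
move=> z_ann s /ideal_pow_ext_span; apply: ideal_span_min (ann_ideal z) _ s.
by move=> _ [r [an_r ->]]; apply: z_ann.
Qed.

End ExtendedIdeal.

Lemma in_Gamma_submodule (R : comPzRingType) (a : R -> Prop) (V : lmodType R) :
  is_submodule (@in_Gamma R a V).
Proof.
split=> [|x y [m xm] [n yn]|r x [n xn]]; first by exists 0%N => r _; rewrite scaler0.
  exists (maxn m n) => r an_r; rewrite scalerDr xm ?yn ?addr0 //.
    exact: ideal_pow_mono (leq_maxr m n) r an_r.
  exact: ideal_pow_mono (leq_maxl m n) r an_r.
by exists n => r' an_r'; rewrite scalerA mulrC -scalerA xn // scaler0.
Qed.

Section BaseChange.
Variables (R S : comPzRingType) (h : {rmorphism R -> S}).

Lemma base_change_span (N : lmodType R) (T : lmodType S) (t : S -> N -> T)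
    (P : T -> Prop) :
  is_base_change h t -> is_submodule P -> (forall s n, P (t s n)) -> forall x, P x.
Proof.
move=> [_ t_univ] P_sub Pt x; apply/(quotmod_pi_eq0 P_sub).
have zero_bilin : base_change_bilin h (fun (_ : S) (_ : N) => 0 : quotmod P_sub).
  by split=> *; rewrite ?addr0 ?scaler0.
have [g [_ g_unique]] := t_univ _ _ zero_bilin.
rewrite (g_unique (quotmod_pi P_sub)) => [|s n]; last exact/quotmod_pi_eq0.
by rewrite -(g_unique \0).
Qed.

Lemma base_change_ext (N : lmodType R) (T P : lmodType S) (t : S -> N -> T)
    (f g : {linear T -> P}) :
  is_base_change h t -> (forall s n, f (t s n) = g (t s n)) -> forall x, f x = g x.
Proof.
move=> bc fg; apply: base_change_span bc _ fg.
split=> [|x y fx gx|c x fx]; first by rewrite !linear0.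
  by rewrite !linearD fx gx.
by rewrite !linearZ fx.
Qed.

Lemma base_change_map (N N' : lmodType R) (T T' : lmodType S)
    (t : S -> N -> T) (t' : S -> N' -> T') (u : {linear N -> N'}) :
  is_base_change h t -> is_base_change h t' ->
  exists g : {linear T -> T'}, forall s n, g (t s n) = t' s (u n).
Proof.
move=> [_ t_univ] [t'_bilin _].
by have [g [g_def _]] := t_univ _ _ (bilin_comp_linear t'_bilin u); exists g.
Qed.

Lemma base_change_Gamma (a : R -> Prop) (N : lmodType R) (T : lmodType S)
    (t : S -> N -> T) :
  base_change_bilin h t -> forall s y, in_Gamma a y -> in_Gamma (ideal_ext h a) (t s y).
Proof.
move=> t_bilin s y [n yn]; exists n; apply: ideal_pow_ext_ann => r an_r.
by rewrite -(bilin_scaler t_bilin) yn // (bilin_0r t_bilin).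
Qed.

Lemma base_change_right_exact (M W G : lmodType R) (p : {linear M -> W})
    (j : {linear G -> M}) (p_surj : forall w, exists m, p m = w)
    (ker_p : forall m, p m = 0 -> exists y, j y = m)
    (T1 TW T3 : lmodType S) (t1 : S -> M -> T1) (tW : S -> W -> TW)
    (t3 : S -> G -> T3) (bc1 : is_base_change h t1) (bcW : is_base_change h tW)
    (psi : {linear T1 -> TW}) (rho : {linear T3 -> T1})
    (psi_def : forall s m, psi (t1 s m) = tW s (p m))
    (rho_def : forall s y, rho (t3 s y) = t1 s (j y)) z :
  psi z = 0 -> exists x, rho x = z.
Proof.
have im_sub := is_submodule_image rho; pose q := quotmod_pi im_sub.
have [[t1D t1Dr _ t1M] _] := bc1.
have q_t1 s m m' : p m = p m' -> q (t1 s m) = q (t1 s m').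
  move=> /eqP; rewrite -subr_eq0 -linearB => /eqP/ker_p [y jy].
  apply/subr0_eq; rewrite -linearB -(bilin_subr bc1.1).
  by apply/(quotmod_pi_eq0 im_sub); exists (t3 s y); rewrite rho_def jy.
pose sec w := proj1_sig (constructive_indefinite_description _ (p_surj w)).
have secK w : p (sec w) = w by rewrite /sec; case: constructive_indefinite_description.
have F_bilin : base_change_bilin h (fun s w => q (t1 s (sec w))).
  split=> [s s' w|s w w'|r s w|s s' w]; rewrite ?t1D ?t1M ?linearD ?linearZ //.
    by rewrite -linearD -t1Dr; apply: q_t1; rewrite linearD !secK.
  by rewrite -linearZ -(bilin_scaler bc1.1); apply: q_t1; rewrite linearZ !secK.
have [lam [lam_def _]] := bcW.2 _ _ F_bilin.
have q_lam : forall w, q w = (lam \o psi) w.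
  by apply: base_change_ext bc1 _ => s m; rewrite /= psi_def lam_def; apply: q_t1.
by move=> psi_z; apply/(quotmod_pi_eq0 im_sub); rewrite q_lam /= psi_z linear0.
Qed.

End BaseChange.

Section TorsionOfBaseChange.
Variables (R S : comPzRingType) (h : {rmorphism R -> S}) (h_flat : flat_morphism h).
Variables (a : R -> Prop) (K : Type) (M : lmodType R).
Variables (T1 : lmodType S) (t1 : S -> M -> T1) (bc1 : is_base_change h t1).
Variables (T2 : lmodType S) (t2 : S -> prodmod K M -> T2) (bc2 : is_base_change h t2).
Variables (eps : {linear T2 -> prodmod K T1}) (eps_inj : injective eps).
Hypothesis eps_def :
  forall s (m : prodmod K M), eps (t2 s m) = ((fun k => t1 s (m k)) : prodmod K T1).
Variables (G : lmodType R) (j : {linear G -> M}).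
Hypothesis Gamma_j : forall m, in_Gamma a m -> exists y, j y = m.
Variables (T3 : lmodType S) (t3 : S -> G -> T3) (rho : {linear T3 -> T1}).
Hypothesis rho_def : forall s y, rho (t3 s y) = t1 s (j y).

Lemma ann_ext_pow_sub_image n z : gen_card_le (ideal_pow a n) K ->
  (forall s, ideal_pow (ideal_ext h a) n s -> s *: z = 0) -> exists x, rho x = z.
Proof.
move=> gen z_ann.
have [c [an_c c_gen]] := gen_card_le_family (ideal_pow_ideal a n) gen.
pose phi (m : M) : prodmod K M := fun k => c k *: m.
have phi_lin : linear phi.
  move=> r m m'; apply: functional_extensionality => k.
  by rewrite prodmod_addE prodmod_scaleE /phi scalerDr !scalerA mulrC.
have [W [p [i [p_surj i_inj i_p]]]] := linear_epi_mono_factor (as_linear phi_lin).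
have [TW [tW bcW]] := base_change_exists h W.
have [g g_def] := base_change_map i bcW bc2.
have g_inj := h_flat i_inj bcW bc2 g_def.
have [psi psi_def] := base_change_map p bc1 bcW.
have eps_g_psi w k : eps (g (psi w)) k = h (c k) *: w.
  move: w; apply: (base_change_span (P := fun w => eps (g (psi w)) k = h (c k) *: w)) bc1 _ _.
    split=> [|w w' ew ew'|r w ew]; first by rewrite !linear0.
      by rewrite !linearD prodmod_addE ew ew'.
    have -> : eps (g (psi (r *: w))) = r *: eps (g (psi w)) by rewrite !linearZ.
    by rewrite prodmod_scaleE ew scalerA mulrC -scalerA.
  move=> s m; rewrite psi_def g_def i_p eps_def /=.
  exact: bilin_scaler bc1.1 s (c k) m.
have psi_z : psi z = 0.
  apply: g_inj; apply: eps_inj; rewrite !linear0.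
  apply: functional_extensionality => k; rewrite eps_g_psi.
  exact/z_ann/ideal_pow_ext/an_c.
have ker_p m : p m = 0 -> exists y, j y = m.
  move=> /(congr1 i); rewrite i_p linear0 => phi_m.
  apply: Gamma_j; exists n; apply: c_gen (ann_ideal m) _ => k.
  by move: phi_m => /(congr1 (fun v : prodmod K M => v k)).
exact: (base_change_right_exact p_surj ker_p bc1 bcW psi_def rho_def psi_z).
Qed.

End TorsionOfBaseChange.

Theorem proposition8p5
  (R S : comPzRingType) (h : {rmorphism R -> S}) (h_flat : flat_morphism h)
  (a : R -> Prop) (a_ideal : is_ideal a)
  (K : Type) (* the cardinal kappa *)
  (hgen : forall N : nat, exists n : nat, (N <= n)%N /\ gen_card_le (ideal_pow a n) K)
  (M : lmodType R)
  (* T1 = S (x)_R M *)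
  (T1 : lmodType S) (t1 : S -> M -> T1) (bc1 : is_base_change h t1)
  (* T2 = S (x)_R (M^kappa) *)
  (T2 : lmodType S) (t2 : S -> prodmod K M -> T2) (bc2 : is_base_change h t2)
  (* epsilon_{S,M,kappa} : T2 -> T1^kappa, s (x) (m_i)_i |-> (s (x) m_i)_i *)
  (eps : {linear T2 -> prodmod K T1})
  (eps_def : forall s (m : prodmod K M), eps (t2 s m) = ((fun i => t1 s (m i)) : prodmod K T1))
  (eps_inj : injective eps)
  (* G = Gamma_a(M), given with its inclusion j into M *)
  (G : lmodType R) (j : {linear G -> M}) (j_inj : injective j)
  (j_im : forall x : M, in_Gamma a x <-> exists y, j y = x)
  (* T3 = S (x)_R Gamma_a(M) *)
  (T3 : lmodType S) (t3 : S -> G -> T3) (bc3 : is_base_change h t3)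
  (* rho^h_a(M) : T3 -> T1, s (x) m |-> s (x) m *)
  (rho : {linear T3 -> T1}) (rho_def : forall s y, rho (t3 s y) = t1 s (j y)) :
  injective rho /\
  (forall z : T1, in_Gamma (ideal_ext h a) z <-> exists x, rho x = z).
Proof.
split; first exact: h_flat _ _ j j_inj _ _ _ _ bc3 bc1 rho rho_def.
move=> z; split=> [[n z_ann]|[x <-]].
  have [n' [le_nn' gen]] := hgen n.
  apply: (ann_ext_pow_sub_image h_flat bc1 bc2 eps_inj eps_def _ rho_def gen).
    by move=> m /j_im.
  by move=> s an'_s; apply: z_ann; apply: ideal_pow_mono le_nn' s an'_s.
have Gamma_rho := is_submodule_preim rho (in_Gamma_submodule (ideal_ext h a) T1).
apply: base_change_span bc3 Gamma_rho _ x => s y; rewrite rho_def.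
by apply: base_change_Gamma bc1.1 s (j y) _; apply/j_im; exists y.
Qed.
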